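(* Let $n\ge 3$ and $m\ge 2n$. Then the set \[D=\{(i,2i-1),(i,2i): i\in[n-1]\}\cup\{(n,j): 2n-1\le j\le m-1\}\] is an identifying code of $K_n\times K_m$.
   Context: $K_n\times K_m$ is the direct product of complete graphs: vertex set $[n]\times[m]$, with $(i,r)$ adjacent to $(j,s)$ iff $i\ne j$ and $r \ne s$. An identifying code is a dominating set $C$ with $N[x]\cap C\ne N[y]\cap C$ for all distinct vertices $x,y$ ($N[x]$ the closed neighborhood). *)

From mathcomp Require Import all_boot.
Set Implicit Arguments. Unset Strict Implicit. Unset Printing Implicit Defensive.

(* Direct product K_n x K_m on vertex set 'I_n * 'I_m.
   A vertex (i, r) with i : 'I_n, r : 'I_m stands for the paper's
   vertex (i+1, r+1) in [n] x [m]. *)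
Definition kprod_adj (n m : nat) : rel ('I_n * 'I_m) :=
  fun x y => (x.1 != y.1) && (x.2 != y.2).

Definition closed_nbhd (n m : nat) (x : 'I_n * 'I_m) : {set 'I_n * 'I_m} :=
  [set y | (y == x) || kprod_adj x y].

Definition is_identifying_code (n m : nat) (C : {set 'I_n * 'I_m}) : Prop :=
  (forall x, closed_nbhd x :&: C != set0) /\
  (forall x y, x != y -> closed_nbhd x :&: C != closed_nbhd y :&: C).

(* The set D of the paper, written with 1-based labels a = i+1, b = r+1:
   D = {(a,2a-1),(a,2a) : a in [n-1]} U {(n,b) : 2n-1 <= b <= m-1}. *)
Definition codeD (n m : nat) : {set 'I_n * 'I_m} :=
  [set v : 'I_n * 'I_m | let a := (nat_of_ord v.1).+1 in let b := (nat_of_ord v.2).+1 in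
           ((1 <= a <= n - 1) && ((b == 2 * a - 1) || (b == 2 * a)))
           || ((a == n) && (2 * n - 1 <= b <= m - 1))].

From mathcomp Require Import all_boot zify.

Set Implicit Arguments.
Unset Strict Implicit.
Unset Printing Implicit Defensive.

(* The code D of K_n x K_m (rows 'I_n, columns 'I_m, 0-based) contains the
   vertices (k, 2k) for every row k, (k, 2k+1) for every row k < n-1, and
   the last row at columns 2n-2, ..., m-2.  In the direct product a vertex v
   lies in N[x] iff v agrees with x in both coordinates or in neither; hence
   a code vertex separates x from y as soon as it lies in exactly one of
   N[x], N[y].  Domination uses the vertices
   (0,0), (1,2), (2,4), one of which is adjacent to any given x. *)

Lemma in_closed_nbhd n m (x v : 'I_n * 'I_m) :
  (v \in closed_nbhd x) = ((v.1 == x.1) == (v.2 == x.2)).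
Proof.
case: x v => [i r] [k c]; rewrite inE /kprod_adj /= xpair_eqE /=.
by rewrite (eq_sym i) (eq_sym r); case: (k == i); case: (c == r).
Qed.

Lemma separated_by n m (C : {set 'I_n * 'I_m}) (x y v : 'I_n * 'I_m) :
  v \in C -> (v \in closed_nbhd x) != (v \in closed_nbhd y) ->
  closed_nbhd x :&: C != closed_nbhd y :&: C.
Proof.
move=> vC; apply: contra => /eqP Exy.
by have := erefl (v \in closed_nbhd x :&: C); rewrite {2}Exy !in_setI vC !andbT => ->.
Qed.

Lemma nbhd_split_same_row n m (x y v : 'I_n * 'I_m) :
  x.1 = y.1 -> x.2 != y.2 -> (v.2 == x.2) || (v.2 == y.2) ->
  (v \in closed_nbhd x) != (v \in closed_nbhd y).
Proof.
move=> Exy1 Nxy2; rewrite !in_closed_nbhd Exy1.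
by case/orP=> /eqP->; rewrite eqxx ?(eq_sym y.2) (negbTE Nxy2); case: (v.1 == y.1).
Qed.

Lemma nbhd_split_same_col n m (x y v : 'I_n * 'I_m) :
  x.2 = y.2 -> v.1 = x.1 -> x.1 != y.1 ->
  (v \in closed_nbhd x) != (v \in closed_nbhd y).
Proof.
move=> Exy2 Ev1 /negbTE Nxy1; rewrite !in_closed_nbhd Ev1 Exy2 eqxx Nxy1.
by case: (v.2 == _).
Qed.

Lemma nbhd_split_cross n m (x y v : 'I_n * 'I_m) :
  x.1 != y.1 -> v.2 != x.2 -> v.2 != y.2 -> (v.1 == x.1) || (v.1 == y.1) ->
  (v \in closed_nbhd x) != (v \in closed_nbhd y).
Proof.
move=> Nxy1 /negbTE Nvx /negbTE Nvy; rewrite !in_closed_nbhd Nvx Nvy.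
case/orP=> /eqP->; rewrite eqxx ?(negbTE Nxy1) //.
by rewrite (eq_sym y.1) (negbTE Nxy1).
Qed.

Section CodeD.

Variables n m : nat.

Lemma codeD_pair (m_ge2n : 2 * n <= m) (v : 'I_n * 'I_m) :
  (v.2 == 2 * v.1 :> nat) || (v.2 == 2 * v.1 + 1 :> nat) && (v.1 < n - 1) ->
  v \in codeD n m.
Proof. by have := ltn_ord v.1; have := ltn_ord v.2; rewrite inE; lia. Qed.

Lemma codeD_column (v : 'I_n * 'I_m) :
  v.2 < m - 1 -> v.1 = minn (v.2 %/ 2) (n - 1) :> nat -> v \in codeD n m.
Proof. by have := ltn_ord v.1; have := ltn_ord v.2; rewrite inE; lia. Qed.

Lemma codeD_meets_row (m_ge2n : 2 * n <= m) (i : 'I_n) :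
  exists2 v, v \in codeD n m & v.1 = i.
Proof.
have c_lt : 2 * i < m by have := ltn_ord i; lia.
by exists (i, Ordinal c_lt) => //; apply: (codeD_pair m_ge2n); rewrite eqxx.
Qed.

Lemma codeD_meets_column (n_gt0 : 0 < n) (c : 'I_m) :
  c < m - 1 -> exists2 v, v \in codeD n m & v.2 = c.
Proof.
move=> c_lt; have k_lt : minn (c %/ 2) (n - 1) < n by lia.
by exists (Ordinal k_lt, c) => //; apply: codeD_column.
Qed.

(* Of two distinct columns at least one is not the last, so meets D. *)
Lemma codeD_meets_columns (n_gt0 : 0 < n) (r s : 'I_m) :
  r != s -> exists2 v, v \in codeD n m & (v.2 == r) || (v.2 == s).
Proof.
move=> Nrs; have Nrs' : (r : nat) != s := Nrs.
have [r_lt|r_ge] := ltnP r (m - 1).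
  by have [v vD vr] := codeD_meets_column n_gt0 r_lt; exists v; rewrite ?vr ?eqxx.
have s_lt : s < m - 1 by have := ltn_ord r; have := ltn_ord s; lia.
by have [v vD vs] := codeD_meets_column n_gt0 s_lt; exists v; rewrite ?vs ?eqxx ?orbT.
Qed.

(* D is dominating: among the rows 0, 1, 2 one avoids the row of x while its
   D-vertex (k, 2k) avoids the column of x; that vertex is adjacent to x. *)
Lemma codeD_dominating (n_ge3 : 3 <= n) (m_ge2n : 2 * n <= m)
  (x : 'I_n * 'I_m) : closed_nbhd x :&: codeD n m != set0.
Proof.
have [k [k_lt Nk1 Nk2]] : exists k, [/\ k < n, k != x.1 & 2 * k != x.2].
  have [/andP[N1 N2]|N] := boolP ((x.1 != 0 :> nat) && (x.2 != 0 :> nat)).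
    by exists 0; split => //; lia.
  have [/andP[N1 N2]|N'] := boolP ((x.1 != 1 :> nat) && (x.2 != 2 :> nat)).
    by exists 1; split => //; lia.
  by exists 2; split; lia.
have c_lt : 2 * k < m by lia.
apply/set0Pn; exists (Ordinal k_lt, Ordinal c_lt).
rewrite in_setI codeD_pair ?eqxx // andbT in_closed_nbhd.
by rewrite -!val_eqE /= (negbTE Nk1) (negbTE Nk2).
Qed.

(* For two distinct rows i, j there is a vertex of D in row i or j avoiding
   two prescribed columns r, s: if, say, i is not the last row, the three
   D-vertices (i, 2i), (i, 2i+1), (j, 2j) lie in three distinct columns. *)
Lemma codeD_cross (m_ge2n : 2 * n <= m) (i j : 'I_n) (r s : 'I_m) : i != j ->
  exists2 v, v \in codeD n m & [&& (v.1 == i) || (v.1 == j), v.2 != r & v.2 != s].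
Proof.
wlog i_lt : i j / i < n - 1.
  move=> gen Nij; have [i_lt|i_ge] := ltnP i (n - 1); first exact: gen.
  have Nij' : (i : nat) != j := Nij.
  have j_lt : j < n - 1 by have := ltn_ord i; have := ltn_ord j; lia.
  have [v vD /and3P[vij vr vs]] := gen j i j_lt ltac:(by rewrite eq_sym).
  by exists v => //; rewrite orbC vij vr vs.
move=> Nij; have c0_lt : 2 * i < m by lia.
have c1_lt : 2 * i + 1 < m by lia.
have c2_lt : 2 * j < m by have := ltn_ord j; lia.
have [/andP[N0r N0s]|N0] := boolP ((2 * i != r :> nat) && (2 * i != s :> nat)).
  exists (i, Ordinal c0_lt); first by rewrite codeD_pair //= eqxx.
  by rewrite /= eqxx; apply/and3P.
have [/andP[N1r N1s]|N1] := boolP ((2 * i + 1 != r :> nat) && (2 * i + 1 != s :> nat)).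
  exists (i, Ordinal c1_lt); first by rewrite codeD_pair //= eqxx i_lt orbT.
  by rewrite /= eqxx; apply/and3P.
exists (j, Ordinal c2_lt); first by rewrite codeD_pair //= eqxx.
have Nij' : (i : nat) != j := Nij.
rewrite /= eqxx orbT; apply/and3P; split => //.
all: by apply/eqP => /(congr1 val) /=; lia.
Qed.

End CodeD.

Theorem mainTheorem14 (n m : nat) (hn : 3 <= n) (hm : 2 * n <= m) :
  is_identifying_code (codeD n m).
Proof.
split; first exact: codeD_dominating.
move=> x y Nxy.
have [E1|N1] := eqVneq x.1 y.1.
-
  have N2 : x.2 != y.2.
    by apply: contraNneq Nxy; case: x y E1 => [? ?] [? ?] /= -> ->.
  have [v vD vxy] := codeD_meets_columns (ltnW (ltnW hn)) N2.
  exact: separated_by vD (nbhd_split_same_row E1 N2 vxy).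
have [E2|N2] := eqVneq x.2 y.2.
-
  have [v vD Ev1] := codeD_meets_row hm x.1.
  exact: separated_by vD (nbhd_split_same_col E2 Ev1 N1).
have [v vD /and3P[vxy vx vy]] := codeD_cross hm x.2 y.2 N1.
exact: separated_by vD (nbhd_split_cross N1 vx vy vxy).
Qed.
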